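(* Consider the complex polynomial optimization problem $\inf\{f : g_j\ge0,\ j\in[m]\}$ and assume it is a quadratically constrained quadratic program, i.e. $\deg f\le2$ and $1\le\deg g_j\le2$ for all $j\in[m]$. Then the term-sparsity relaxation with $d=1$, $k=1$ and the dense first-order relaxation have the same optimal value: $\rho^{\mathrm{ts}}_{1,1}=\rho_1$.
   Context: Notation: $[n]=\{1,\dots,n\}$; $\mathbb N^n_t=\{\alpha\in\mathbb N^n:\sum_i\alpha_i\le t\}$. Let $\mathbf z=(z_1,\dots,z_n)$ be complex variables and $\bar{\mathbf z}$ their conjugates. A polynomial $p\in\mathbb C[\mathbf z,\bar{\mathbf z}]$ is written $p=\sum_{(\beta,\gamma)}p_{\beta,\gamma}\mathbf z^\beta\bar{\mathbf z}^\gamma$; its support is $\mathrm{supp}(p)=\{(\beta,\gamma)\in\mathbb N^n\times\mathbb N^n:p_{\beta,\gamma}\neq0\}$ and $\deg p=\max\{|\beta|+|\gamma|:(\beta,\gamma)\in\mathrm{supp}(p)\}$. $p$ is Hermitian if $p_{\beta,\gamma}=\overline{p_{\gamma,\beta}}$. For $(\beta,\gamma)\in\mathbb N^n\times\mathbb N^n$ and $\mathscr B\subseteq\mathbb N^n\times\mathbb N^n$, $(\beta,\gamma)+\mathscr B=\{(\beta+\beta',\gamma+\gamma'):(\beta',\gamma')\in\mathscr B\}$. The problem has Hermitian $f,g_1,\dots,g_m$; $d_j=\lceil\deg g_j/2\rceil$, $d_0=0$, $g_0=1$, $d_{\min}=\max\{\lceil\deg f/2\rceil,d_1,\dots,d_m\}$,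 and $\mathscr A=\mathrm{supp}(f)\cup\bigcup_{j=1}^m\mathrm{supp}(g_j)$. Moments: $\mathbf y=(y_{\beta,\gamma})$ complex with $y_{\beta,\gamma}=\overline{y_{\gamma,\beta}}$; $L_{\mathbf y}(p)=\sum p_{\beta,\gamma}y_{\beta,\gamma}$; for Hermitian $g$, $\mathbf M_t(g\mathbf y)$ is the Hermitian matrix indexed by $\mathbb N^n_t$ with $(\beta,\gamma)$ entry $\sum_{(\beta',\gamma')}g_{\beta',\gamma'}y_{\beta+\beta',\gamma+\gamma'}$, and $\mathbf M_t(\mathbf y)=\mathbf M_t(1\cdot\mathbf y)$. Dense relaxation $(Q_d)$, $d\ge d_{\min}$: minimize $L_{\mathbf y}(f)$ s.t. $\mathbf M_d(\mathbf y)\succeq0$, $\mathbf M_{d-d_j}(g_j\mathbf y)\succeq0$ ($j\in[m]$), $y_{\mathbf 0,\mathbf 0}=1$; optimal value $\rho_d$. Graphs and matrices: graphs are undirected and simple; for a graph $G$ on an ordered node set $V$ with $|V|=r$, $B_G$ is its adjacency matrix with ones on the diagonal, $\circ$ is the entrywise product, $\mathbf H^r_+$ is the cone of $r\times r$ Hermitian PSD matrices indexed by $V$, $\Pi_G(Q)$ keeps the entries $(\beta,\gamma)$ of $Q$ with $\beta=\gamma$ or $\{\beta,\gamma\}\in E(G)$ and sets the others to $0$, and $\Pi_G(\mathbf H^r_+)=\{\Pi_G(Q):Q\in\mathbf H^r_+\}$. A chordal extension $\overline G$ of $G$ is a chordal graph on the same nodes containing $G$; a fixed rule $G\mapsto\overline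 G$ is used, satisfying $G\subseteq H\Rightarrow\overline G\subseteq\overline H$ (subgraph inclusion). Term sparsity: for a graph $G$ with nodes in $\mathbb N^n$ and Hermitian $g$, $\mathrm{supp}_g(G)=\{(\beta+\beta',\gamma+\gamma'):\ (\beta=\gamma\in V(G)\text{ or }\{\beta,\gamma\}\in E(G)),\ (\beta',\gamma')\in\mathrm{supp}(g)\}$. Fix $d\ge d_{\min}$. The tsp graph $G^{\mathrm{tsp}}_d$ has nodes $\mathbb N^n_d$ and edges $\{\beta,\gamma\}$, $\beta\ne\gamma$, with $(\beta,\gamma)\in\mathscr A$. Put $G^{(0)}_{d,0}=G^{\mathrm{tsp}}_d$ and, for $j\in[m]$, let $G^{(0)}_{d,j}$ be the graph on $\mathbb N^n_{d-d_j}$ without edges. For $k\ge1$ and $j\in\{0\}\cup[m]$, $F^{(k)}_{d,j}$ is the graph on $\mathbb N^n_{d-d_j}$ whose edges are the $\{\beta,\gamma\}$, $\beta\ne\gamma$, with $((\beta,\gamma)+\mathrm{supp}(g_j))\cap\bigcup_{i=0}^m\mathrm{supp}_{g_i}(G^{(k-1)}_{d,i})\neq\emptyset$, and $G^{(k)}_{d,j}=\overline{F^{(k)}_{d,j}}$. With $r_j=\binom{n+d-d_j}{d-d_j}$, the relaxation $(Q^{\mathrm{ts}}_{d,k})$ is: minimize $L_{\mathbf y}(f)$ s.t. $B_{G^{(k)}_{d,j}}\circ\mathbf M_{d-d_j}(g_j\mathbf y)\in\Pi_{G^{(k)}_{d,j}}(\mathbf H^{r_j}_+)$ for all $j\in\{0\}\cup[m]$,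 and $y_{\mathbf 0,\mathbf 0}=1$; optimal value $\rho^{\mathrm{ts}}_{d,k}$. *)

From HB Require Import structures.
From mathcomp Require Import all_boot all_order all_algebra.
From mathcomp Require Import finmap.
From mathcomp Require Import complex.
From mathcomp Require Import boolp classical_sets reals constructive_ereal ereal.

Set Implicit Arguments.
Unset Strict Implicit.
Unset Printing Implicit Defensive.

Import Order.TTheory GRing.Theory Num.Theory.
Local Open Scope ring_scope.
Local Open Scope classical_set_scope.

Definition mon (n : nat) := {ffun 'I_n -> nat}.

Definition mdeg n (a : mon n) : nat := (\sum_(i < n) a i)%N.
Definition madd n (a b : mon n) : mon n := [ffun i => (a i + b i)%N].
Definition mzero n : mon n := [ffun _ => 0%N].

Definition Nnt (n t : nat) :=
  {a : {ffun 'I_n -> 'I_t.+1} | (\sum_(i < n) (a i : nat) <= t)%N}.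

Definition monof n t (a : Nnt n t) : mon n := [ffun i => nat_of_ord (val a i)].

Section Poly.
Variable R : realType.
Variable n : nat.

(* Polynomials p in C[z, zbar]: finitely supported coefficient functions
   (beta, gamma) |-> p_{beta,gamma}, C = R[i]. *)
Definition cpoly := {fsfun (mon n * mon n) -> R[i] with 0}.

Definition pdeg (p : cpoly) : nat :=
  (\max_(x <- finsupp p) (mdeg x.1 + mdeg x.2))%N.

Definition herm_poly (p : cpoly) : Prop :=
  forall b c : mon n, p (b, c) = (p (c, b))^*.

Definition cpoly1 : cpoly :=
  [fsfun x in [fset (mzero n, mzero n)]%fset => (1 : R[i])].

Definition moments := mon n -> mon n -> R[i].

Definition hermitian_moments (y : moments) : Prop :=
  forall b c : mon n, y b c = (y c b)^*.

Definition Ly (y : moments) (p : cpoly) : R[i] :=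
  \sum_(x <- finsupp p) p x * y x.1 x.2.

Definition Mloc (t : nat) (g : cpoly) (y : moments) : Nnt n t -> Nnt n t -> R[i] :=
  fun a b => \sum_(x <- finsupp g) g x * y (madd (monof a) x.1) (madd (monof b) x.2).

Definition Mmom (t : nat) (y : moments) := @Mloc t cpoly1 y.

End Poly.
Arguments Mloc {R n} t g y.
Arguments Mmom {R n} t y.

Section Matrices.
Variable R : realType.
Variable V : finType.

Definition psd (Q : V -> V -> R[i]) : Prop :=
  (forall a b, Q a b = (Q b a)^*) /\
  forall v : V -> R[i], 0 <= \sum_(a : V) \sum_(b : V) (v a)^* * Q a b * v b.

Definition simple_graph (E : rel V) : Prop := irreflexive E /\ symmetric E.

Definition subgraph (E F : rel V) : Prop := forall x y, E x y -> F x y.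

Definition chordal (E : rel V) : Prop :=
  forall s : seq V, uniq s -> (4 <= size s)%N -> cycle E s ->
    exists x y, [/\ x \in s, y \in s, E x y, next s x != y & prev s x != y].

Definition adjB (E : rel V) : V -> V -> R[i] :=
  fun a b => if (a == b) || E a b then 1 else 0.

Definition hadamard (M N : V -> V -> R[i]) : V -> V -> R[i] :=
  fun a b => M a b * N a b.

Definition PiG (E : rel V) (Q : V -> V -> R[i]) : V -> V -> R[i] :=
  fun a b => if (a == b) || E a b then Q a b else 0.

Definition in_PiG_psd (E : rel V) (M : V -> V -> R[i]) : Prop :=
  exists Q, psd Q /\ PiG E Q = M.

End Matrices.

Definition chordal_ext_rule (ext : forall V : finType, rel V -> rel V) : Prop :=
  (forall (V : finType) (E : rel V), simple_graph E ->
      [/\ simple_graph (ext V E), chordal (ext V E) & subgraph E (ext V E)]) /\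
  (forall (V : finType) (E F : rel V), simple_graph E -> simple_graph F ->
      subgraph E F -> subgraph (ext V E) (ext V F)).

Section Relaxations.
Variable R : realType.
Variables n m : nat.
Variable f : cpoly R n.
Variable g : 'I_m -> cpoly R n.

(* g_j for j in {0} u [m], encoded by 'I_m.+1 with 0 |-> g_0 = 1 and
   lift ord0 j |-> g_j *)
Definition gext (j : 'I_m.+1) : cpoly R n :=
  match unlift ord0 j with Some j' => g j' | None => cpoly1 R n end.

Definition dg (j : 'I_m) : nat := uphalf (pdeg (g j)).
Definition dext (j : 'I_m.+1) : nat := uphalf (pdeg (gext j)).

Definition dmin : nat := maxn (uphalf (pdeg f)) (\max_(j < m) dg j).

Definition Asupp (x : mon n * mon n) : bool :=
  (x \in finsupp f) || [exists j, x \in finsupp (g j)].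

Definition dense_feasible (d : nat) (y : moments R n) : Prop :=
  [/\ hermitian_moments y,
      psd (Mmom d y),
      (forall j : 'I_m, psd (Mloc (d - dg j)%N (g j) y))
    & y (mzero n) (mzero n) = 1].

Definition rho (d : nat) : \bar R :=
  ereal_inf [set ((@complex.Re R (Ly y f))%:E) | y in dense_feasible d].

Definition suppG (t : nat) (h : cpoly R n) (E : rel (Nnt n t)) (x : mon n * mon n)
  : Prop :=
  exists u v : Nnt n t, ((u == v) || E u v) /\
    exists2 w, w \in finsupp h & x = (madd (monof u) w.1, madd (monof v) w.2).

Definition tsp_graph (t : nat) : rel (Nnt n t) :=
  fun u v => (u != v) &&
    (Asupp (monof u, monof v) || Asupp (monof v, monof u)).

Section TS.
Variable ext : forall V : finType, rel V -> rel V.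
Variable d : nat.

Definition graph_family := forall j : 'I_m.+1, rel (Nnt n (d - dext j)%N).

Definition G0 : graph_family :=
  fun j => if j == ord0 then @tsp_graph (d - dext j)%N else (fun _ _ => false).

Definition Fnext (Gprev : graph_family) : graph_family :=
  fun j u v =>
    let hit (a b : Nnt n (d - dext j)%N) :=
      exists2 w, w \in finsupp (gext j) &
        exists i : 'I_m.+1, suppG (gext i) (Gprev i)
                              (madd (monof a) w.1, madd (monof b) w.2) in
    (u != v) && `[< hit u v \/ hit v u >].

Fixpoint Gts (k : nat) : graph_family :=
  match k with
  | 0 => G0
  | k'.+1 => fun j => @ext _ (@Fnext (Gts k') j)
  end.

Definition ts_feasible (k : nat) (y : moments R n) : Prop :=
  [/\ hermitian_moments y,
      (forall j : 'I_m.+1,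
         in_PiG_psd (@Gts k j)
           (hadamard (adjB R (@Gts k j)) (Mloc (d - dext j)%N (gext j) y)))
    & y (mzero n) (mzero n) = 1].

Definition rho_ts (k : nat) : \bar R :=
  ereal_inf [set ((@complex.Re R (Ly y f))%:E) | y in ts_feasible k].

End TS.
End Relaxations.

From HB Require Import structures.
From mathcomp Require Import all_boot all_order all_algebra.
From mathcomp Require Import finmap.
From mathcomp Require Import complex.
From mathcomp Require Import boolp classical_sets reals constructive_ereal ereal.

(* Every dense-feasible moment sequence is term-sparse feasible (a PSD
   matrix lies in Pi_G(H_+) for any graph G), so it suffices to turn a
   feasible y of (Q^ts_{1,1}) into a feasible y' of (Q_1) with the same
   objective.  For d = 1 the data are very special:
   - the block j = 0 is the moment matrix M_1(y), and the graph G^(1)_{1,0}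
     contains the tsp graph, i.e. every pair of N^n_1 whose moment occurs in
     supp(f) or some supp(g_j);
   - for j >= 1 we have d_j = 1 (as 1 <= deg g_j), so the block is the 1x1
     matrix [L_y(g_j)] and the sparsity pattern is irrelevant.
   Taking the PSD completion Q of the j = 0 block and redefining the moments
   of degree <= 1 as the entries of Q ("moment completion") gives a y' with
   M_1(y') = Q PSD and y' = y on every moment appearing in f or the g_j, so
   all constraints and the objective carry over. *)

Set Implicit Arguments.
Unset Strict Implicit.
Unset Printing Implicit Defensive.
Import Order.TTheory GRing.Theory Num.Theory.
Local Open Scope ring_scope.
Local Open Scope classical_set_scope.

Lemma madd0m n (a : mon n) : madd (mzero n) a = a.
Proof. by apply/ffunP => i; rewrite !ffunE. Qed.

Lemma maddm0 n (a : mon n) : madd a (mzero n) = a.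
Proof. by apply/ffunP => i; rewrite !ffunE addn0. Qed.

Lemma monof_inj n t : injective (@monof n t).
Proof.
move=> a b eq_ab; apply/val_inj/ffunP => i; apply/val_inj.
by have := congr1 (fun F : mon n => F i) eq_ab; rewrite !ffunE.
Qed.

Lemma monof_order0 n t (a : Nnt n t) : t = 0%N -> monof a = mzero n.
Proof.
by move=> t0; subst t; apply/ffunP => i; rewrite !ffunE; case: (val a i) => -[].
Qed.

Lemma Nnt_order0_eq n t (a b : Nnt n t) : t = 0%N -> a = b.
Proof. by move=> t0; apply: monof_inj; rewrite !monof_order0. Qed.

Section MomentMatrices.
Variables (R : realType) (n : nat).

Lemma finsupp_cpoly1 : finsupp (cpoly1 R n) = [fset (mzero n, mzero n)]%fset.
Proof.
apply/fsetP => x; rewrite mem_finsupp /cpoly1 fsfunE !inE.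
by case: (x == _); rewrite ?oner_neq0 ?eqxx.
Qed.

Lemma pdeg_cpoly1 : pdeg (cpoly1 R n) = 0%N.
Proof.
rewrite /pdeg finsupp_cpoly1 big_seq_fset1 /= /mdeg.
by rewrite big1 // => i _; rewrite ffunE.
Qed.

Lemma Mmom_entry t (y : moments R n) (u v : Nnt n t) :
  Mmom t y u v = y (monof u) (monof v).
Proof.
rewrite /Mmom /Mloc finsupp_cpoly1 big_seq_fset1 /cpoly1 fsfunE inE eqxx.
by rewrite mul1r /= !maddm0.
Qed.

Lemma Mloc_order0 t (h : cpoly R n) (y : moments R n) (u v : Nnt n t) :
  t = 0%N -> Mloc t h y u v = Ly y h.
Proof. by move=> t0; rewrite /Mloc !monof_order0 //; under eq_bigr do rewrite !madd0m. Qed.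

Lemma Ly_eq_on (y y' : moments R n) (h : cpoly R n) :
  (forall x, x \in finsupp h -> y x.1 x.2 = y' x.1 x.2) -> Ly y h = Ly y' h.
Proof. by move=> yy'; apply: eq_big_seq => x /yy' ->. Qed.

End MomentMatrices.

Section SparsePSD.
Variables (R : realType) (V : finType).

Lemma psd_ext (M N : V -> V -> R[i]) :
  (forall a b, M a b = N a b) -> psd M -> psd N.
Proof.
move=> MN [Mherm Mpos]; split => [a b|v]; first by rewrite -!MN.
by under eq_bigr do under eq_bigr do rewrite -MN; apply: Mpos.
Qed.

(* A PSD matrix is its own PSD completion, whatever the sparsity graph. *)
Lemma psd_in_PiG (E : rel V) (M : V -> V -> R[i]) :
  psd M -> in_PiG_psd E (hadamard (adjB R E) M).
Proof.
move=> Mpsd; exists M; split => //; apply/funext => a; apply/funext => b.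
by rewrite /PiG /hadamard /adjB; case: ifP; rewrite ?mul1r ?mul0r.
Qed.

Lemma PiG_entry (E : rel V) (M Q : V -> V -> R[i]) a b :
  PiG E Q = hadamard (adjB R E) M -> (a == b) || E a b -> Q a b = M a b.
Proof.
move=> QM ab; have := congr1 (fun F => F a b) QM.
by rewrite /PiG /hadamard /adjB ab mul1r.
Qed.

Lemma in_PiG_psd_singleton (E : rel V) (M : V -> V -> R[i]) :
  (forall a b : V, a = b) -> in_PiG_psd E (hadamard (adjB R E) M) -> psd M.
Proof.
move=> single [Q [Qpsd QM]]; apply: psd_ext Qpsd => a b.
by rewrite (single a b); apply: (PiG_entry QM); rewrite eqxx.
Qed.

End SparsePSD.

Lemma moment_completion (R : realType) n t (E : rel (Nnt n t))
    (y : moments R n) :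
  hermitian_moments y -> in_PiG_psd E (hadamard (adjB R E) (Mmom t y)) ->
  exists y' : moments R n,
    [/\ hermitian_moments y', psd (Mmom t y')
      & forall b c, (forall u v, monof u = b -> monof v = c -> (u == v) || E u v) ->
          y' b c = y b c].
Proof.
move=> yherm [Q [[Qherm Qpos] QM]].
pose label b : option (Nnt n t) := [pick u | monof u == b].
have labelE u : label (monof u) = Some u.
  by rewrite /label; case: pickP => [u' /eqP/monof_inj -> //|/(_ u)]; rewrite eqxx.
have labelP b u : label b = Some u -> monof u = b.
  by rewrite /label; case: pickP => [u' /eqP <- [<-]|].
pose y' : moments R n := fun b c =>
  if (label b, label c) is (Some u, Some v) then Q u v else y b c.
exists y'; split.
- move=> b c; rewrite /y'.
  by case: (label b) (label c) => [u|] [v|] //=; rewrite Qherm.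
- by apply: psd_ext (conj Qherm Qpos) => u v; rewrite Mmom_entry /y' !labelE.
- move=> b c edge; rewrite /y' /=.
  case lb: (label b) => [u|] //; case lc: (label c) => [v|] //.
  have [bu cv] := (labelP _ _ lb, labelP _ _ lc).
  by rewrite (PiG_entry QM (edge u v bu cv)) Mmom_entry bu cv.
Qed.

Section Relaxations.
Variables (R : realType) (n m : nat) (f : cpoly R n) (g : 'I_m -> cpoly R n).

Lemma gext0 : gext g ord0 = cpoly1 R n.
Proof. by rewrite /gext unlift_none. Qed.

Lemma gext_lift j : gext g (lift ord0 j) = g j.
Proof. by rewrite /gext liftK. Qed.

Lemma dext0 : dext g ord0 = 0%N.
Proof. by rewrite /dext gext0 pdeg_cpoly1. Qed.

Lemma dext_lift j : dext g (lift ord0 j) = dg g j.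
Proof. by rewrite /dext gext_lift. Qed.

Lemma dense_ts_feasible ext d k (y : moments R n) :
  dense_feasible g d y -> ts_feasible f g ext d k y.
Proof.
case=> yherm Mpsd Lpsd y00; split => // j; apply: psd_in_PiG.
case: (unliftP ord0 j) => [j'|] ->.
- by rewrite dext_lift gext_lift; apply: Lpsd.
- by rewrite dext0 subn0 gext0; apply: Mpsd.
Qed.

Lemma Fnext_simple d (Gprev : graph_family g d) j :
  simple_graph (Fnext Gprev (j := j)).
Proof.
split => [u|u v]; first by rewrite /Fnext eqxx.
by rewrite /Fnext eq_sym; congr (_ && _); apply: asbool_equiv_eq; tauto.
Qed.

(* F^(1)_{d,0} contains the tsp graph: since g_0 = 1, each tsp edge {u,v}
   already lies in supp_{g_0}(G^(0)_{d,0}). *)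
Lemma tsp_edge_Fnext d (u v : Nnt n (d - dext g ord0)) :
  u != v -> Asupp f g (monof u, monof v) -> Fnext (G0 f (d := d)) u v.
Proof.
have unit_supp : (mzero n, mzero n) \in finsupp (gext g ord0).
  by rewrite gext0 finsupp_cpoly1 inE.
move=> uv Auv; rewrite /Fnext uv; apply/asboolP; left.
exists (mzero n, mzero n) => //; exists ord0, u, v; split.
  by rewrite /G0 /= /tsp_graph uv Auv /= orbT.
by exists (mzero n, mzero n).
Qed.

Lemma tsp_edge_Gts1 ext d (u v : Nnt n (d - dext g ord0)) :
  chordal_ext_rule ext -> u != v -> Asupp f g (monof u, monof v) ->
  @Gts R n m f g ext d 1 ord0 u v.
Proof.
move=> [ext_chordal _] uv Auv.
have [_ _ sub] := ext_chordal _ _ (Fnext_simple (G0 f (d := d)) ord0).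
exact/sub/tsp_edge_Fnext.
Qed.

Lemma ts_dense_feasible ext (y : moments R n) :
  chordal_ext_rule ext -> (forall j, 1 <= pdeg (g j))%N ->
  ts_feasible f g ext 1 1 y ->
  exists2 y', dense_feasible g 1 y' & Ly y' f = Ly y f.
Proof.
move=> ext_rule gdeg [yherm blocks y00].
have block0 := blocks ord0; rewrite gext0 in block0.
have [y' [y'herm M1psd agree]] := moment_completion yherm block0.
have agreeA x : Asupp f g x -> y' x.1 x.2 = y x.1 x.2.
  case: x => b c Abc; apply: agree => u v bu cv; case: eqP => //= /eqP uv.
  by apply: tsp_edge_Gts1; rewrite // bu cv.
exists y'; last by apply: Ly_eq_on => x xf; rewrite agreeA // /Asupp xf.
split => //.
- by move: M1psd; rewrite dext0.
- move=> j; have dj0 : (1 - dext g (lift ord0 j) = 0)%N.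
    by apply/eqP; rewrite subn_eq0 dext_lift /dg uphalf_gt0.
  have := in_PiG_psd_singleton (fun a b => Nnt_order0_eq a b dj0) (blocks _).
  rewrite dext_lift gext_lift in dj0 *; apply: psd_ext => a b.
  rewrite !Mloc_order0 //; apply: Ly_eq_on => x xg.
  by rewrite agreeA //; apply/orP; right; apply/existsP; exists j.
- by rewrite agree // => u v u0 v0; rewrite (monof_inj (etrans u0 (esym v0))) eqxx.
Qed.

End Relaxations.

Theorem mainTheorem4 (R : realType) (n m : nat) (f : cpoly R n)
    (g : 'I_m -> cpoly R n) (ext : forall V : finType, rel V -> rel V) :
  chordal_ext_rule ext ->
  herm_poly f -> (forall j, herm_poly (g j)) ->
  (pdeg f <= 2)%N -> (forall j, 1 <= pdeg (g j) <= 2)%N ->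
  rho_ts f g ext 1 1 = rho f g 1.
Proof.
move=> ext_rule _ _ _ gdeg.
have gdeg1 j : (1 <= pdeg (g j))%N by case/andP: (gdeg j).
rewrite /rho_ts /rho; congr ereal_inf; apply/seteqP; split => _ [y yfeas <-].
- have [y' y'feas y'f] := ts_dense_feasible ext_rule gdeg1 yfeas.
  by exists y' => //; rewrite y'f.
- by exists y => //; exact: dense_ts_feasible.
Qed.
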